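(* Let $F$ be a CNF formula over variables $x_1,\dots,x_n$ with clauses $C_1,\dots,C_m$ of two or three literals each. Let $R$ be the triple set and $H=(V,A)$ the hypergraph constructed from $F$ as described in the context. Let $A'\subseteq A$, and suppose $A'$ contains a cyclic path $P$ from $\alpha\beta$ to $c_{m+1}\gamma$. Then the triple set $\mathrm{triples}(A')$ is inconsistent.
   Context: **Triples and trees.** A rooted triple $pq|o$, with $p,q,o$ distinct leaves and unordered in $p,q$, is displayed by a rooted binary tree $T$ if the path from $p$ to $q$ is node-disjoint from the path from $o$ to the root. A triple set is consistent if some rooted binary tree displays all its triples, and inconsistent otherwise. **Triples and arcs.** The triple $pq|o$ corresponds to the hyperarc $\mathrm{arc}(pq|o)=\{p,q\}\to\{\{p,o\},\{q,o\}\}$, and $\mathrm{triples}(A')$ is the set of triples corresponding to arcs of $A'$. We write $pq$ for $\{p,q\}$. **Hypergraph notions.** A hyperarc $u\to\{v,v'\}$ has tail $u$ and heads $\{v,v'\}$. A path from $u_0$ to $u_\ell$ is a sequence of distinct arcs $(a_1,\dots,a_\ell)$ with $\mathrm{t}(a_1)=u_0$, $u_\ell\in\mathrm{h}(a_\ell)$, and $\mathrm{t}(a_{k+1})\in\mathrm{h}(a_k)$. An arc $a_k$ is a back-arc if some $k'<k$ has $\mathrm{t}(a_{k'})\in\mathrm{h}(a_k)$. The path is cyclic if it has a back-arc. **Construction.** Use leaves - $x_i^j,\bar x_i^j,y_i^j,\bar y_i^j$ for $i\in[n]$, $j\in[m]$; - $b_i,b'_i$ for $i\in[n+1]$; - $c_j,d_j$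 for $j\in[m]$; - $c_{m+1}$, and $\alpha,\beta,\gamma$. The triple set $R$ is the union of the following groups. (i) For each $i\in[n]$: - $b_ib'_i|x_i^1$ and $b'_ix_i^1|y_i^1$; - $x_i^jy_i^j|x_i^{j+1}$ and $y_i^jx_i^{j+1}|y_i^{j+1}$ for $1\le j\le m-1$; - $x_i^my_i^m|b_{i+1}$ and $y_i^mb_{i+1}|b'_{i+1}$. (ii) For each $i\in[n]$: - $b_ib'_i|\bar x_i^1$ and $b'_i\bar x_i^1|\bar y_i^1$; - $\bar x_i^j\bar y_i^j|\bar x_i^{j+1}$ and $\bar y_i^j\bar x_i^{j+1}|\bar y_i^{j+1}$ for $1\le j\le m-1$; - $\bar x_i^m\bar y_i^m|b_{i+1}$ and $\bar x_i^mb_{i+1}|b'_{i+1}$. (iii) For each clause $C_j$: - for each positive occurrence of $x_i$ in $C_j$, the triples $c_jd_j|x_i^j$, $c_jx_i^j|y_i^j$, $c_jy_i^j|c_{j+1}$; - for each negative occurrence of $x_i$ in $C_j$, the same triples with $\bar x_i^j,\bar y_i^j$ in place of $x_i^j,y_i^j$; - if $j<m$, the triple $c_jc_{j+1}|d_{j+1}$. (iv) Connecting triples: $\alpha\beta|b_1$, $\beta b_1|b'_1$, $b_{n+1}b'_{n+1}|c_1$, $b'_{n+1}c_1|d_1$, $c_mc_{m+1}|\gamma$. Then $A=\{\mathrm{arc}(t):t\in R\}$, and $V$ is the set of leaf pairs occurring in arcs of $A$. *)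

From HB Require Import structures.
From mathcomp Require Import all_boot.
From mathcomp Require Import finmap.

Set Implicit Arguments.
Unset Strict Implicit.
Unset Printing Implicit Defensive.

Local Open Scope fset_scope.

(*   LX i j = x_i^j, LXb i j = bar x_i^j, LY i j = y_i^j,               *)
(*   LYb i j = bar y_i^j, LB i = b_i, LB' i = b'_i, LC j = c_j,         *)
(*   LD j = d_j, LAlpha, LBeta, LGamma = alpha, beta, gamma.            *)
Inductive leaf : Type :=
| LX of nat & nat | LXb of nat & nat | LY of nat & nat | LYb of nat & nat
| LB of nat | LB' of nat | LC of nat | LD of nat
| LAlpha | LBeta | LGamma.

Definition leaf_code (l : leaf) : nat * nat * nat :=
  match l with
  | LX i j => (0, i, j) | LXb i j => (1, i, j)
  | LY i j => (2, i, j) | LYb i j => (3, i, j)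
  | LB i => (4, i, 0) | LB' i => (5, i, 0)
  | LC j => (6, j, 0) | LD j => (7, j, 0)
  | LAlpha => (8, 0, 0) | LBeta => (9, 0, 0) | LGamma => (10, 0, 0)
  end%N.

Definition leaf_decode (c : nat * nat * nat) : option leaf :=
  let: (t, i, j) := c in
  match t with
  | 0 => Some (LX i j) | 1 => Some (LXb i j)
  | 2 => Some (LY i j) | 3 => Some (LYb i j)
  | 4 => Some (LB i) | 5 => Some (LB' i)
  | 6 => Some (LC i) | 7 => Some (LD i)
  | 8 => Some LAlpha | 9 => Some LBeta | 10 => Some LGamma
  | _ => None
  end%N.

Lemma leaf_codeK : pcancel leaf_code leaf_decode.
Proof. by case. Qed.

HB.instance Definition _ := Countable.copy leaf (pcan_type leaf_codeK).

(* CNF formulas.  A literal is (i, true) for x_i and (i, false) for     *)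
(* the negation of x_i.  The formula is the list of its clauses          *)
(* C_1, ..., C_m (m = size cls); clause C_j is nth [::] cls j.-1.        *)
Definition literal := (nat * bool)%type.
Definition cnf := seq (seq literal).

Definition wf_cnf (n : nat) (cls : cnf) : Prop :=
  forall C, C \in cls ->
    ((size C == 2) || (size C == 3)) /\
    (forall l, l \in C -> (1 <= l.1 <= n)%N).

Definition clause (cls : cnf) (j : nat) : seq literal := nth [::] cls j.-1.

(* Rooted triples: (p, q, o) stands for pq|o.                           *)
Definition triple := (leaf * leaf * leaf)%type.
Definition tr (p q o : leaf) : triple := (p, q, o).

Definition group_i (m i : nat) : seq triple :=
  [:: tr (LB i) (LB' i) (LX i 1); tr (LB' i) (LX i 1) (LY i 1)] ++
  flatten [seq [:: tr (LX i j) (LY i j) (LX i j.+1);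
                   tr (LY i j) (LX i j.+1) (LY i j.+1)] | j <- iota 1 m.-1] ++
  [:: tr (LX i m) (LY i m) (LB i.+1); tr (LY i m) (LB i.+1) (LB' i.+1)].

Definition group_ii (m i : nat) : seq triple :=
  [:: tr (LB i) (LB' i) (LXb i 1); tr (LB' i) (LXb i 1) (LYb i 1)] ++
  flatten [seq [:: tr (LXb i j) (LYb i j) (LXb i j.+1);
                   tr (LYb i j) (LXb i j.+1) (LYb i j.+1)] | j <- iota 1 m.-1] ++
  [:: tr (LXb i m) (LYb i m) (LB i.+1); tr (LXb i m) (LB i.+1) (LB' i.+1)].

Definition lit_triples (j : nat) (l : literal) : seq triple :=
  let: (i, pos) := l in
  let u := if pos then LX i j else LXb i j in
  let v := if pos then LY i j else LYb i j in
  [:: tr (LC j) (LD j) u; tr (LC j) u v; tr (LC j) v (LC j.+1)].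

Definition group_iii (cls : cnf) (j : nat) : seq triple :=
  flatten [seq lit_triples j l | l <- clause cls j] ++
  (if (j < size cls)%N then [:: tr (LC j) (LC j.+1) (LD j.+1)] else [::]).

Definition group_iv (n m : nat) : seq triple :=
  [:: tr LAlpha LBeta (LB 1); tr LBeta (LB 1) (LB' 1);
      tr (LB n.+1) (LB' n.+1) (LC 1); tr (LB' n.+1) (LC 1) (LD 1);
      tr (LC m) (LC m.+1) LGamma].

Definition Rset (n : nat) (cls : cnf) : seq triple :=
  let m := size cls in
  flatten [seq group_i m i ++ group_ii m i | i <- iota 1 n] ++
  flatten [seq group_iii cls j | j <- iota 1 m] ++
  group_iv n m.

(* Hypergraph: vertices are unordered leaf pairs {p,q} (as finite sets), *)
Definition vertex := {fset leaf}.
Definition harc := (vertex * {fset vertex})%type.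
Definition tail (a : harc) : vertex := a.1.
Definition heads (a : harc) : {fset vertex} := a.2.

Definition pr (p q : leaf) : vertex := [fset p; q].

Definition arc_of (t : triple) : harc :=
  let: (p, q, o) := t in (pr p q, [fset pr p o; pr q o]).

Definition Aset (n : nat) (cls : cnf) : seq harc := map arc_of (Rset n cls).

Definition triples (A' : {fset harc}) : triple -> Prop :=
  fun t => arc_of t \in A'.

Definition arc0 : harc := (fset0, fset0).

Definition hpath (A' : {fset harc}) (u v : vertex) (s : seq harc) : Prop :=
  [/\ s != [::], uniq s, {subset s <= A'},
      tail (nth arc0 s 0) = u /\ v \in heads (last arc0 s) &
      forall k, (k.+1 < size s)%N ->
        tail (nth arc0 s k.+1) \in heads (nth arc0 s k)].

Definition back_arc (s : seq harc) (k : nat) : Prop :=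
  exists k', (k' < k)%N /\ tail (nth arc0 s k') \in heads (nth arc0 s k).

Definition cyclic (s : seq harc) : Prop :=
  exists k, (k < size s)%N /\ back_arc s k.

(* identified with their addresses (seq bool = path from the root).     *)
Inductive tree : Type := Lf of leaf | Nd of tree & tree.

Fixpoint leaves (t : tree) : seq leaf :=
  match t with Lf x => [:: x] | Nd l r => leaves l ++ leaves r end.

Fixpoint addr (t : tree) (x : leaf) : option (seq bool) :=
  match t with
  | Lf y => if x == y then Some [::] else None
  | Nd l r =>
      match addr l x with
      | Some a => Some (false :: a)
      | None => omap (cons true) (addr r x)
      end
  end.

(* address of the lowest common ancestor of two nodes *)
Fixpoint lcp (a b : seq bool) : seq bool :=
  match a, b with
  | x :: a', y :: b' => if x == y then x :: lcp a' b' else [::]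
  | _, _ => [::]
  end.

Definition on_path (a b w : seq bool) : bool :=
  prefix (lcp a b) w && (prefix w a || prefix w b).

Definition on_root_path (a w : seq bool) : bool := prefix w a.

Definition displays (T : tree) (t : triple) : Prop :=
  let: (p, q, o) := t in
  exists ap aq ao,
    [/\ addr T p = Some ap, addr T q = Some aq, addr T o = Some ao &
        forall w, ~~ (on_path ap aq w && on_root_path ao w)].

(* rooted binary (phylogenetic) tree: leaf labels pairwise distinct *)
Definition consistent (S : triple -> Prop) : Prop :=
  exists T : tree, uniq (leaves T) /\ forall t, S t -> displays T t.

(* In a tree displaying pq|o, the lowest common ancestors of {p,o} and of
   {q,o} are strict ancestors of that of {p,q}.  Hence, if T displays every
   triple of A', the depth of the lowest common ancestor of the tail pair
   strictly decreases along each step of a path in A'.  A back-arc a_k,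
   whose heads contain the tail of an earlier a_k', would make this depth at
   a_k' smaller than at a_k, contradicting the decrease from a_k' to a_k.
   Nothing specific to the reduction from CNF formulas is needed. *)

From mathcomp Require Import all_boot.
From mathcomp Require Import finmap.
Local Open Scope fset_scope.

Lemma lcp_sym (a b : seq bool) : lcp a b = lcp b a.
Proof.
elim: a b => [|x a IH] [|y b] //=.
by rewrite eq_sym; case: eqP => [->|]; rewrite ?IH.
Qed.

Lemma lcp_prefix (a b : seq bool) : prefix (lcp a b) a.
Proof.
elim: a b => [|x a IH] [|y b] //=.
by case: eqP => _ //=; rewrite eqxx IH.
Qed.

Lemma size_lcp_lt (a b c : seq bool) :
  ~~ prefix (lcp a b) c -> size (lcp a c) < size (lcp a b).
Proof.
elim: a b c => [|x a IH] [|y b] c /=; rewrite ?prefix0s //.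
case: (x == y); last by rewrite prefix0s.
case: c => [|z c] //=.
by case: (x == z) => //= /IH.
Qed.

Lemma eq_pr (p q p' q' : leaf) :
  pr p q = pr p' q' -> (p = p' /\ q = q') \/ (p = q' /\ q = p').
Proof.
move=> E.
have : p \in pr p' q' by rewrite -E in_fset2 eqxx.
have : q \in pr p' q' by rewrite -E in_fset2 eqxx orbT.
have : p' \in pr p q by rewrite E in_fset2 eqxx.
have : q' \in pr p q by rewrite E in_fset2 eqxx orbT.
rewrite !in_fset2.
by do 4!case/orP=> /eqP ?; subst; auto.
Qed.

(* Labels absent from [T] get the root's address; this junk value is never
   met, since only leaves of displayed triples are measured. *)
Definition lca_depth (T : tree) (p q : leaf) : nat :=
  size (lcp (odflt [::] (addr T p)) (odflt [::] (addr T q))).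

Lemma lca_depth_sym (T : tree) (p q : leaf) : lca_depth T p q = lca_depth T q p.
Proof. by rewrite /lca_depth lcp_sym. Qed.

Lemma lca_depth_pr (T : tree) (p q p' q' : leaf) :
  pr p q = pr p' q' -> lca_depth T p q = lca_depth T p' q'.
Proof. by case/eq_pr=> -[-> ->]; rewrite // lca_depth_sym. Qed.

Lemma displays_lca_depth (T : tree) (p q o : leaf) :
  displays T (tr p q o) ->
  lca_depth T p o < lca_depth T p q /\ lca_depth T q o < lca_depth T p q.
Proof.
rewrite /lca_depth => -[ap [aq [ao [-> -> -> disj]]]] /=.
have lca_not_above_o : ~~ prefix (lcp ap aq) ao.
  apply/negP=> pre; move: (disj (lcp ap aq)).
  by rewrite /on_path /on_root_path prefix_refl lcp_prefix pre.
split; first exact: size_lcp_lt.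
by rewrite (lcp_sym ap aq) size_lcp_lt // lcp_sym.
Qed.

Definition tail_depth (T : tree) (t : triple) : nat :=
  let: (p, q, _) := t in lca_depth T p q.

Lemma tail_depth_head_lt (T : tree) (t t' : triple) :
  displays T t -> tail (arc_of t') \in heads (arc_of t) ->
  tail_depth T t' < tail_depth T t.
Proof.
case: t t' => [[p q] o] [[p' q'] o'] /= /displays_lca_depth[lt_po lt_qo].
by rewrite in_fset2 => /orP[] /eqP /(lca_depth_pr T) ->.
Qed.

Lemma ranked_hpath_not_cyclic (A' : {fset harc}) (rank : harc -> nat)
    (u v : vertex) (s : seq harc) :
  {in A' &, forall a b, tail b \in heads a -> rank b < rank a} ->
  hpath A' u v s -> ~ cyclic s.
Proof.
move=> rank_lt [_ _ sA' _ next] [k [lt_k_s [k' [lt_k'k back]]]].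
have inA' i : i < size s -> nth arc0 s i \in A'.
  by move=> lt_i; apply: sA'; rewrite mem_nth.
pose r i := rank (nth arc0 s i).
have gtn_trans y x z : y < x -> z < y -> z < x.
  by move=> lt_yx /ltn_trans; apply.
have gtn_convex : {in gtn (size s) &, forall i j l, i < l < j -> l \in gtn (size s)}.
  by move=> i j _ /= lt_j l /andP[_ /ltn_trans]; apply.
have r_step : {in gtn (size s), forall i, i.+1 \in gtn (size s) -> r i.+1 < r i}.
  by move=> i /= lt_i lt_Si; rewrite rank_lt ?inA' ?next ?(ltnW lt_Si).
have r_decr := homo_ltn_in gtn_trans gtn_convex r_step.
have lt_k's := ltn_trans lt_k'k lt_k_s.
have back_lt : r k' < r k by apply: rank_lt; rewrite ?inA'.
have := r_decr k' k lt_k's lt_k_s lt_k'k.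
by rewrite ltnNge ltnW.
Qed.

Lemma cyclic_hpath_inconsistent (R : seq triple) (A' : {fset harc})
    (u v : vertex) (s : seq harc) :
  {subset A' <= map arc_of R} -> hpath A' u v s -> cyclic s ->
  ~ consistent (triples A').
Proof.
move=> sub path_s cyclic_s [T [_ displayed]].
pose t0 := tr LAlpha LAlpha LAlpha.
pose rep a := nth t0 R (index a (map arc_of R)).
have repK a : a \in A' -> arc_of (rep a) = a.
  move=> /sub aR; rewrite -(nth_map t0 (arc_of t0)) ?nth_index //.
  by rewrite -(size_map arc_of) index_mem.
apply: (@ranked_hpath_not_cyclic A' (fun a => tail_depth T (rep a)) u v s) => //.
move=> a b aA' bA' ba; apply: tail_depth_head_lt; last by rewrite !repK.
by apply: displayed; rewrite /triples repK.
Qed.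

Theorem lemma4 (n : nat) (cls : cnf) (A' : {fset harc}) (P : seq harc) :
  (0 < size cls)%N ->
  wf_cnf n cls ->
  {subset A' <= Aset n cls} ->
  hpath A' (pr LAlpha LBeta) (pr (LC (size cls).+1) LGamma) P ->
  cyclic P ->
  ~ consistent (triples A').
Proof.
by move=> _ _; apply: (@cyclic_hpath_inconsistent (Rset n cls)).
Qed.
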